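(* Let $n\ge4$ be even and let $\varphi$ be a smooth skew-morphism of $D_n$ with $\mathrm{Ker}\,\varphi=\langle a^2\rangle$ and power function $\pi$; let $k$ be the order of $\varphi$. Then there exist integers $r,s\in\{0,\dots,n/2-1\}$, $u$ with $\gcd(u,n/2)=1$, and $e,f\in\{1,\dots,k-1\}$ such that for all integers $i$: $\varphi(a^{2i})=a^{2iu}$, $\varphi(a^{2i+1})=a^{2iu+2r+1}$, $\varphi(a^{2i}b)=a^{2iu+2s}b$, $\varphi(a^{2i+1}b)=a^{2iu+2r+2s\sigma(u,e)+1}b$, and $\pi(a^{2i})\equiv1$, $\pi(a^{2i+1})\equiv e$, $\pi(a^{2i}b)\equiv f$, $\pi(a^{2i+1}b)\equiv ef\pmod k$; and the following hold: (a) $k$ is the smallest positive integer with $r\sigma(u,k)\equiv0$ and $s\sigma(u,k)\equiv0\pmod{n/2}$; (b) $\gcd(e,k)=\gcd(f,k)=1$, $e\not\equiv1$, $f\not\equiv1$, $ef\not\equiv1$, $e^2\equiv1$, $f^2\equiv1\pmod k$; (c) $u^{e-1}\equiv1$ and $u^{f-1}\equiv1\pmod{n/2}$; (d) $r\sigma(u,e-1)\equiv u-2r-1\pmod{n/2}$; (e) $s\sigma(u,f-1)\equiv0\pmod{n/2}$; (f) $r\sigma(u,f-1)+s\sigma(u,e-1)\equiv u-2r-1\pmod{n/2}$.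
   Context: $D_n=\langle a,b\mid a^n=b^2=1,\ b^{-1}ab=a^{-1}\rangle$. A skew-morphism of a finite group $A$ is a permutation $\varphi$ of the set $A$ with $\varphi(1)=1$ for which there exists a function $\pi:A\to\mathbb{Z}_k$, where $k$ is the order of $\varphi$, such that $\varphi(xy)=\varphi(x)\varphi^{\pi(x)}(y)$ for all $x,y\in A$; $\pi$ is the power function. The kernel is $\mathrm{Ker}\,\varphi=\{x:\pi(x)=1\}$, and the core is $\mathrm{Core}\,\varphi=\bigcap_{i=1}^k\varphi^i(\mathrm{Ker}\,\varphi)$. $\varphi$ is smooth if $\varphi(x)\in x\,\mathrm{Core}\,\varphi$ for all $x$. For integers $u$ and $j\ge0$, $\sigma(u,j)=\sum_{i=1}^{j}u^{i-1}$ (so $\sigma(u,0)=0$). *)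

From HB Require Import structures.
From mathcomp Require Import all_boot all_order all_algebra all_fingroup.
Set Implicit Arguments.
Unset Strict Implicit.
Unset Printing Implicit Defensive.
Import GRing.Theory Num.Theory.

Definition zexp (gT : finGroupType) (x : gT) (z : int) : gT :=
  match z with
  | Posz m => (x ^+ m)%g
  | Negz m => (x ^- m.+1)%g
  end.

Definition sigma (u : int) (j : nat) : int := (\sum_(i < j) u ^+ i)%R.

(* The dihedral group D_n = <a, b | a^n = b^2 = 1, b^-1 a b = a^-1>,
   realised as a group D generated by a, b satisfying the relations with
   #[a] = n, #[b] = 2 and |D| = 2n (so D is isomorphic to the presented group).
   Note: in MathComp, a ^ b = b^-1 * a * b. *)
Definition dihedral (gT : finGroupType) (D : {group gT}) (a b : gT) (n : nat)
  : Prop :=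
  [/\ (D :=: <<[set a; b]>>)%g, #[a]%g = n, #[b]%g = 2,
      (a ^ b = a^-1)%g & #|D| = n.*2].

Definition perm_of_set (gT : finGroupType) (D : {set gT}) (phi : gT -> gT)
  : Prop :=
  {in D, forall x, phi x \in D} /\ {in D &, injective phi}.

Definition perm_order (gT : finGroupType) (D : {set gT}) (phi : gT -> gT)
  (k : nat) : Prop :=
  [/\ 0 < k, {in D, forall x, iter k phi x = x} &
      forall m, 0 < m -> {in D, forall x, iter m phi x = x} -> k <= m].

(* phi is a skew-morphism of D of order k with power function pi : D -> Z_k
   (Z_k represented by {0,...,k-1}). *)
Definition skew_morphism (gT : finGroupType) (D : {set gT}) (phi : gT -> gT)
  (pi : gT -> nat) (k : nat) : Prop :=
  [/\ perm_of_set D phi, phi 1%g = 1%g, perm_order D phi k,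
      {in D, forall x, pi x < k} &
      {in D &, forall x y, phi (x * y)%g = (phi x * iter (pi x) phi y)%g}].

Definition skew_kernel (gT : finGroupType) (D : {set gT}) (pi : gT -> nat)
  (k : nat) : {set gT} :=
  [set x in D | pi x %% k == 1 %% k].

Definition skew_core (gT : finGroupType) (D : {set gT}) (phi : gT -> gT)
  (pi : gT -> nat) (k : nat) : {set gT} :=
  \bigcap_(1 <= i < k.+1) [set iter i phi x | x in skew_kernel D pi k].

Definition smooth (gT : finGroupType) (D : {set gT}) (phi : gT -> gT)
  (pi : gT -> nat) (k : nat) : Prop :=
  {in D, forall x, phi x \in (x *: skew_core D phi pi k)%g}.

From HB Require Import structures.
From mathcomp Require Import all_boot all_order all_algebra all_fingroup.
From mathcomp Require Import cyclic zify ring.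
Import GRing.Theory Num.Theory.
Set Implicit Arguments. Unset Strict Implicit. Unset Printing Implicit Defensive.

(* Smoothness says that phi x = x c with c in the core, which lies inside the
   kernel <a^2>; hence phi moves every element inside its coset of <a^2>.
   Elements of the kernel have power 1, so phi(a^(2t) y) = phi(a^(2t)) phi(y);
   in particular phi restricts to an automorphism a^(2t) |-> a^(2tu) of the
   cyclic kernel, and phi is determined by u together with phi a = a^(2r+1)
   and phi b = a^(2s) b.  Writing e = pi a and f = pi b, phi acts on each of
   the four cosets a^(2t), a^(2t+1), a^(2t)b, a^(2t+1)b by an affine map
   t |-> t u + c, whose iterates are t |-> t u^j + c sigma(u, j). *)

Section SkewMorphismFacts.

Variables (gT : finGroupType) (D : {group gT}) (phi : gT -> gT).
Variables (pi : gT -> nat) (k : nat).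
Hypothesis phi_skew : skew_morphism D phi pi k.

Lemma iter_in j x : x \in D -> iter j phi x \in D.
Proof.
by have [[phiD _] _ _ _ _] := phi_skew; move=> Dx; elim: j => //= j IH; apply: phiD.
Qed.

Lemma iter_inj j : {in D &, injective (iter j phi)}.
Proof.
have [[_ phi_inj] _ _ _ _] := phi_skew.
elim: j => [|j IH] x y Dx Dy //= /phi_inj eq_xy.
by apply: IH; rewrite // eq_xy ?iter_in.
Qed.

Lemma iter_modk j : {in D, forall x, iter j phi x = iter (j %% k) phi x}.
Proof.
have [_ _ [_ phik _] _ _] := phi_skew; move=> x Dx.
rewrite {1}(divn_eq j k) addnC iterD; congr (iter _ phi _).
by elim: (j %/ k) => //= q IH; rewrite mulSn iterD IH phik.
Qed.

Lemma iter_eq_mod p q :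
  {in D, forall x, iter p phi x = iter q phi x} -> p = q %[mod k].
Proof.
have [_ _ [k_gt0 _ k_min] _ _] := phi_skew; move=> eq_pq.
have no_gap p' q' : p' < q' < k ->
    ~ {in D, forall x, iter p' phi x = iter q' phi x}.
  move=> /andP [lt_pq lt_qk] eq_pq'.
  suff : k <= q' - p' by lia.
  apply: k_min => [|x Dx]; first by rewrite subn_gt0.
  apply: (@iter_inj p') => //; first exact: iter_in.
  by rewrite -iterD subnKC ?(ltnW lt_pq) // eq_pq'.
have eq_mod : {in D, forall x, iter (p %% k) phi x = iter (q %% k) phi x}.
  by move=> x Dx; rewrite -(iter_modk p) // -(iter_modk q) // eq_pq.
case: (ltngtP (p %% k) (q %% k)) => [lt|gt|//].
  by case: (no_gap _ _ _ eq_mod); rewrite lt ltn_pmod.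
case: (no_gap (q %% k) (p %% k)); first by rewrite gt ltn_pmod.
by move=> x Dx; rewrite eq_mod.
Qed.

Lemma iter_mul j : {in D &, forall y z, iter j phi (y * z)%g =
  (iter j phi y * iter (\sum_(i < j) pi (iter i phi y)) phi z)%g}.
Proof.
have [_ _ _ _ phiM] := phi_skew; move=> y z Dy Dz.
elim: j => [|j IH]; first by rewrite big_ord0.
by rewrite /= IH phiM ?iter_in // -iterD big_ord_recr /= addnC.
Qed.

Lemma pi_mul : {in D &, forall x y,
  pi (x * y)%g = \sum_(i < pi x) pi (iter i phi y) %[mod k]}.
Proof.
have [_ _ _ _ phiM] := phi_skew; move=> x y Dx Dy.
apply: iter_eq_mod => z Dz; apply: (@mulgI _ (phi (x * y))%g).
rewrite -phiM ?groupM // -mulgA phiM ?groupM // iter_mul //.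
by rewrite mulgA -phiM.
Qed.

Lemma pi_mul_const x y c : x \in D -> y \in D ->
  (forall i, pi (iter i phi y) = c) -> pi (x * y)%g = pi x * c %[mod k].
Proof.
move=> Dx Dy pi_c; rewrite pi_mul // (eq_bigr (fun _ => c)) //.
by rewrite sum_nat_const card_ord.
Qed.

(* For a smooth skew-morphism, phi moves every element within its coset of
   the kernel, since the core is contained in phi^k(Ker phi) = Ker phi. *)
Lemma smooth_kernel_shift x : smooth D phi pi k -> x \in D ->
  (x^-1 * phi x)%g \in skew_kernel D pi k.
Proof.
move=> phi_smooth Dx; have [_ _ [k_gt0 phik _] _ _] := phi_skew.
move: (phi_smooth x Dx); rewrite mem_lcoset /skew_core big_nat_recr //=.
rewrite inE => /andP [_ /imsetP [y Ky ->]].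
by rewrite phik //; move: Ky; rewrite inE => /andP [].
Qed.

End SkewMorphismFacts.

Section IntegerPowers.

Variables (gT : finGroupType) (a : gT) (n : nat).
Hypotheses (ord_a : #[a]%g = n) (n_gt0 : 0 < n).

Lemma abs_modz (z : int) : Posz `|(z %% n)%Z|%N = (z %% n)%Z.
Proof. by rewrite gez0_abs // modz_ge0 // eqz_nat -lt0n. Qed.

Lemma abs_modz_lt (z : int) : `|(z %% n)%Z|%N < n.
Proof. by rewrite -ltz_nat abs_modz ltz_pmod. Qed.

Lemma zexpE (z : int) : zexp a z = (a ^+ `|(z %% n)%Z|%N)%g.
Proof.
case: z => [j|j] /=; first by rewrite modz_nat absz_nat -ord_a expg_mod_order.
set N := `|(Negz j %% n)%Z|%N.
have n_dvd : n %| j.+1 + N.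
  change (n%:Z %| (j.+1 + N)%:Z)%Z; apply/dvdzP; exists (- (Negz j %/ n)%Z)%R.
  have := divz_eq (Negz j) n; rewrite PoszD /N abs_modz.
  move: (Negz j %/ n)%Z (Negz j %% n)%Z => q r; rewrite NegzE => E.
  have -> : r = (- Posz j.+1 - q * n)%R by rewrite E; ring.
  ring.
by apply/eqP; rewrite eq_invg_mul -expgD -order_dvdn ord_a.
Qed.

Lemma zexp_mem (z : int) : zexp a z \in <[a]>%g.
Proof. by rewrite zexpE mem_cycle. Qed.

Lemma zexp_eq (x y : int) : zexp a x = zexp a y <-> (x = y %[mod n])%Z.
Proof.
rewrite !zexpE; split=> [|->] //.
move/eqP; rewrite eq_expg_mod_order ord_a !modn_small ?abs_modz_lt // => /eqP E.
by rewrite -abs_modz -[RHS]abs_modz E.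
Qed.

Lemma zexpD (x y : int) : zexp a (x + y) = (zexp a x * zexp a y)%g.
Proof.
have -> : (zexp a x * zexp a y)%g = zexp a (`|(x %% n)%Z| + `|(y %% n)%Z|)%N.
  by rewrite /= !zexpE expgD.
by apply/zexp_eq; rewrite PoszD !abs_modz modzDm.
Qed.

Lemma zexpN (x : int) : zexp a (- x) = (zexp a x)^-1%g.
Proof. by apply/eqP; rewrite eq_sym eq_invg_mul -zexpD subrr. Qed.

End IntegerPowers.

Section HalfExponents.

Variables (gT : finGroupType) (a : gT) (m : nat).
Hypotheses (ord_a : #[a]%g = (2 * m)%N) (m_gt0 : 0 < m).

Lemma zexp_half_eq (X Y c : int) :
  zexp a (2 * X + c)%R = zexp a (2 * Y + c)%R <-> (m %| (X - Y)%R)%Z.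
Proof.
have -> : (m %| (X - Y)%R)%Z = ((2 * m)%N %| (2 * X + c - (2 * Y + c))%R)%Z.
  by rewrite PoszM (_ : 2 * X + c - _ = 2 * (X - Y))%R ?dvdz_mul2l //; ring.
rewrite (zexp_eq ord_a) ?muln_gt0 // -eqz_mod_dvd.
by split=> [->|/eqP].
Qed.

Lemma zexp_even_eq (X Y : int) :
  zexp a (2 * X)%R = zexp a (2 * Y)%R <-> (m %| (X - Y)%R)%Z.
Proof. by rewrite -(zexp_half_eq X Y 0) !addr0. Qed.

Lemma zexp_half_reduce (X c : int) :
  exists2 r : nat, r < m & zexp a (2 * X + c)%R = zexp a (2 * Posz r + c)%R.
Proof.
exists `|(X %% m)%Z|%N; first exact: abs_modz_lt.
apply/zexp_half_eq; rewrite abs_modz //; apply/dvdzP; exists (X %/ m)%Z.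
by rewrite {1}(divz_eq X m); ring.
Qed.

End HalfExponents.

Section DihedralRelations.

Variables (gT : finGroupType) (a b : gT) (n : nat).
Hypotheses (ord_a : #[a]%g = n) (n_gt2 : 2 < n) (ord_b : #[b]%g = 2).
Hypothesis conj_ab : (a ^ b = a^-1)%g.

Lemma invg_b : b^-1%g = b.
Proof.
apply/eqP; rewrite eq_invg_mul.
by have := expg_order b; rewrite ord_b expgS expg1 => ->.
Qed.

Lemma b_zexp (z : int) : (b * zexp a z = zexp a (- z) * b)%g.
Proof.
have n_gt0 : 0 < n by apply: ltnW (ltnW n_gt2).
have bab : (b * zexp a z * b = (zexp a z)^-1)%g.
  by rewrite (zexpE ord_a) // -{1}invg_b -mulgA -conjgE conjXg conj_ab expgVn.
have bb : (b * b = 1)%g by rewrite -{1}invg_b mulVg.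
by rewrite (zexpN ord_a) // -bab -!mulgA bb mulg1.
Qed.

(* Since a has order n > 2, b does not commute with a, so b is not in <a>. *)
Lemma b_notin_cycle : b \notin <[a]>%g.
Proof.
apply/negP => /cycleP [j def_b].
have aa : (a ^ b = a)%g.
  by rewrite def_b conjgE (commuteX j (commute_refl a)) mulKg.
have : (a ^+ 2 == 1)%g by rewrite expgS expg1 -{1}aa conj_ab mulVg.
by rewrite -order_dvdn ord_a => /(dvdn_leq (isT : 0 < 2)); rewrite leqNgt n_gt2.
Qed.

Lemma dihedral_elements (D : {group gT}) x : dihedral D a b n -> x \in D ->
  exists i : nat, x = (a ^+ i)%g \/ x = (a ^+ i * b)%g.
Proof.
case=> defD _ _ _ card_D Dx.
have aD : a \in D by rewrite defD mem_gen // !inE eqxx.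
have bD : b \in D by rewrite defD mem_gen // !inE eqxx orbT.
set C := <[a]>%g.
have disjC : C :&: (C :* b)%g = set0.
  apply/setP => y; rewrite !inE mem_rcoset; apply/negP => /andP [Cy Cyb].
  by move: b_notin_cycle; rewrite -[b]invgK groupV -(groupMl _ Cy) Cyb.
have card_CCb : #|C :|: (C :* b)%g| = n.*2.
  have := cardsUI C (C :* b)%g; rewrite disjC cards0 addn0 card_rcoset => ->.
  by rewrite -addnn -ord_a.
have sub_CCb : C :|: (C :* b)%g \subset D.
  apply/subsetP => y; rewrite !inE mem_rcoset => /orP [Cy|Cyb].
    by move: Cy; apply/subsetP; rewrite cycle_subG.
  by rewrite -(mulgKV b y) groupM //; move: Cyb; apply/subsetP; rewrite cycle_subG.
have defCCb : C :|: (C :* b)%g = D.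
  by apply/eqP; rewrite eqEcard sub_CCb card_CCb card_D leqnn.
move: Dx; rewrite -defCCb !inE mem_rcoset => /orP [/cycleP [i ->]|/cycleP [i def_i]].
  by exists i; left.
by exists i; right; rewrite -def_i mulgKV.
Qed.

End DihedralRelations.

Lemma dihedral_parity_cases (gT : finGroupType) (D : {group gT}) (a b : gT)
    (m : nat) x :
  1 < m -> dihedral D a b (2 * m) -> x \in D -> exists t : int,
  [\/ x = zexp a (2 * t)%R, x = zexp a (2 * t + 1)%R,
      x = (zexp a (2 * t)%R * b)%g | x = (zexp a (2 * t + 1)%R * b)%g].
Proof.
move=> m_gt1 dihD Dx; have [_ ord_a ord_b conj_ab _] := dihD.
have n_gt2 : 2 < 2 * m by lia.
have [i def_x] := dihedral_elements ord_a n_gt2 conj_ab dihD Dx.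
have parity : exists t : int, (a ^+ i)%g = zexp a (2 * t)%R \/
                              (a ^+ i)%g = zexp a (2 * t + 1)%R.
  exists (Posz i./2); change (a ^+ i)%g with (zexp a i).
  have := odd_double_half i; case: (odd i) => def_i; [right|left];
    rewrite -{1}def_i; congr zexp; lia.
have [t [E|E]] := parity; exists t.
- by case: def_x => ->; rewrite E; [constructor 1|constructor 3].
- by case: def_x => ->; rewrite E; [constructor 2|constructor 4].
Qed.

Lemma sigma0 (u : int) : sigma u 0 = 0%R.
Proof. by rewrite /sigma big_ord0. Qed.

Lemma sigmaS (u : int) j : sigma u j.+1 = (1 + u * sigma u j)%R.
Proof.
rewrite /sigma big_ord_recl expr0 mulr_sumr; congr (_ + _)%R.
by apply: eq_bigr => i _; rewrite exprS.
Qed.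

Lemma sigma_last (u : int) j :
  0 < j -> sigma u j = (sigma u (j - 1) + u ^+ (j - 1))%R.
Proof. by case: j => // j _; rewrite subSS subn0 /sigma big_ord_recr. Qed.

Lemma expr_last (u : int) j : 0 < j -> (u ^+ j = u * u ^+ (j - 1))%R.
Proof. by case: j => // j _; rewrite subSS subn0 exprS. Qed.

Lemma sigma_telescope (u : int) j : ((u - 1) * sigma u j = u ^+ j - 1)%R.
Proof.
elim: j => [|j IH]; first by rewrite sigma0 expr0 mulr0 subrr.
by rewrite sigmaS mulrDr mulrCA IH exprS; ring.
Qed.

Lemma iter_affine (T : Type) (g : T -> T) (F : int -> T) (u c : int) :
  (forall t, g (F t) = F (t * u + c)%R) ->
  forall j t, iter j g (F t) = F (t * u ^+ j + c * sigma u j)%R.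
Proof.
move=> gF; elim=> [|j IH] t /=; first by rewrite expr0 mulr1 sigma0 mulr0 addr0.
by rewrite IH gF sigmaS exprS; congr F; ring.
Qed.

Lemma sqrt1_mod_coprime x k : 1 < k -> x * x = 1 %[mod k] -> coprime x k /\ 0 < x.
Proof.
move=> k_gt1 xx1.
have cop_x : coprime x k.
  have : coprime (x * x) k by rewrite -coprime_modl xx1 coprime_modl coprime1n.
  by rewrite coprimeMl => /andP [].
split=> //; rewrite lt0n; apply: contraTneq cop_x => ->.
by rewrite /coprime gcd0n; apply/eqP; lia.
Qed.

Lemma unit_pow_pred (u : int) (m j : nat) : coprimez u m -> 0 < j ->
  (m %| (u ^+ j - u)%R)%Z -> (m %| (u ^+ (j - 1) - 1)%R)%Z.
Proof.
rewrite coprimez_sym => cop_mu j_gt0.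
rewrite -(Gauss_dvdzr (u ^+ (j - 1) - 1) cop_mu).
by rewrite (_ : u * _ = u ^+ j - u)%R // (expr_last u j_gt0); ring.
Qed.

Lemma dvdz_lincomb2 (h A B c d : int) :
  (h %| A)%Z -> (h %| B)%Z -> (h %| (A * c + B * d)%R)%Z.
Proof. by move=> hA hB; rewrite rpredD ?dvdz_mulr. Qed.

Lemma dvdz_lincomb3 (h A B C c d g : int) :
  (h %| A)%Z -> (h %| B)%Z -> (h %| C)%Z -> (h %| (A * c + B * d + C * g)%R)%Z.
Proof. by move=> hA hB hC; rewrite rpredD ?dvdz_lincomb2 ?dvdz_mulr. Qed.

Lemma eqz_mod_of_dvd (h x y : int) : (h %| (x - y)%R)%Z -> (x = y %[mod h])%Z.
Proof. by move=> hxy; apply/eqP; rewrite eqz_mod_dvd. Qed.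

Section SmoothSkewMorphismsOfDihedral.

Variables (gT : finGroupType) (D : {group gT}) (a b : gT) (m : nat).
Variables (phi : gT -> gT) (pi : gT -> nat) (k : nat).
Hypotheses (m_gt1 : 1 < m) (dihD : dihedral D a b (2 * m)).
Hypotheses (phi_skew : skew_morphism D phi pi k) (phi_smooth : smooth D phi pi k).
Hypothesis kerE : skew_kernel D pi k = <[a ^+ 2]>%g.

Local Notation ev t := (zexp a (2 * t)%R).
Local Notation od t := (zexp a (2 * t + 1)%R).

Let m_gt0 : 0 < m. Proof. exact: ltnW. Qed.
Let n_gt0 : 0 < 2 * m. Proof. by rewrite muln_gt0. Qed.
Let n_gt2 : 2 < 2 * m. Proof. by lia. Qed.
Let ord_a : #[a]%g = (2 * m)%N. Proof. by case: dihD. Qed.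
Let ord_b : #[b]%g = 2. Proof. by case: dihD. Qed.
Let conj_ab : (a ^ b = a^-1)%g. Proof. by case: dihD. Qed.
Let aD : a \in D. Proof. by case: dihD => -> *; rewrite mem_gen // !inE eqxx. Qed.
Let bD : b \in D. Proof. by case: dihD => -> *; rewrite mem_gen // !inE eqxx orbT. Qed.
Let zexpDa (x y : int) : zexp a (x + y) = (zexp a x * zexp a y)%g.
Proof. exact: zexpD ord_a n_gt0 x y. Qed.
Let b_zexpa (z : int) : (b * zexp a z = zexp a (- z) * b)%g.
Proof. exact: b_zexp ord_a n_gt2 ord_b conj_ab z. Qed.
Let zexp1 : zexp a 1 = a. Proof. by rewrite /= expg1. Qed.

Lemma zexp_in_D (z : int) : zexp a z \in D.
Proof. by move: (zexp_mem ord_a n_gt0 z); apply/subsetP; rewrite cycle_subG. Qed.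

Lemma kernel_even x : x \in <[a ^+ 2]>%g <-> exists t : int, x = ev t.
Proof.
split=> [/cycleP [j ->]|[t ->]]; first by exists j; rewrite -expgM.
have [r _] := zexp_half_reduce ord_a m_gt0 t 0; rewrite !addr0 => ->.
by rewrite -PoszM /= expgM mem_cycle.
Qed.

Lemma odd_notin_kernel t : od t \notin <[a ^+ 2]>%g.
Proof.
apply/negP => /kernel_even [s /(zexp_eq ord_a n_gt0) /eqP].
by rewrite eqz_mod_dvd PoszM => /(dvdz_trans (dvdz_mulr _ (dvdzz 2))); lia.
Qed.

Lemma b_coset_notin_kernel (z : int) : (zexp a z * b)%g \notin <[a ^+ 2]>%g.
Proof.
apply/negP => ker_zb; apply/negP: (b_notin_cycle ord_a n_gt2 conj_ab).
have sub_ker : <[a ^+ 2]>%g \subset <[a]>%g by rewrite cycle_subG mem_cycle.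
by rewrite -(groupMl _ (zexp_mem ord_a n_gt0 z)) (subsetP sub_ker).
Qed.

(* Since a is not in the kernel, phi is not the identity. *)
Lemma k_gt1 : 1 < k.
Proof.
have [_ _ [k_gt0 _ _] _ _] := phi_skew.
rewrite ltn_neqAle k_gt0 andbT; apply: contraNneq (odd_notin_kernel 0) => k1.
by rewrite -kerE inE zexp_in_D -k1 !modn1.
Qed.

Let pi_lt_k x : x \in D -> pi x < k.
Proof. by case: phi_skew => _ _ _ pi_k _; apply: pi_k. Qed.

Lemma pi_even t : pi (ev t) = 1.
Proof.
have : ev t \in skew_kernel D pi k by rewrite kerE; apply/kernel_even; exists t.
by rewrite inE => /andP [_ /eqP]; rewrite !modn_small ?pi_lt_k ?k_gt1 ?zexp_in_D.
Qed.

Lemma phi_evenM t y : y \in D -> phi (ev t * y)%g = (phi (ev t) * phi y)%g.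
Proof. by case: phi_skew => _ _ _ _ phiM Dy; rewrite phiM ?zexp_in_D ?pi_even. Qed.

Lemma pi_evenM t y : y \in D -> pi (ev t * y)%g = pi y.
Proof.
move=> Dy; have := pi_mul phi_skew (zexp_in_D (2 * t)) Dy.
by rewrite pi_even big_ord1 !modn_small ?pi_lt_k ?groupM ?zexp_in_D.
Qed.

Lemma smooth_even x : x \in D -> exists t : int, phi x = (x * ev t)%g.
Proof.
move=> Dx; have := smooth_kernel_shift phi_skew phi_smooth Dx.
by rewrite kerE => /kernel_even [t def_t]; exists t; rewrite -def_t mulKVg.
Qed.

(* A multiplier u with phi(a^(2t)) = a^(2tu) is a unit modulo m, because phi
   is injective on the kernel. *)
Lemma phi_even_coprime (u : nat) :
  (forall t, phi (ev t) = ev (t * u)%R) -> coprime u m.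
Proof.
move=> phi_ev; set g := gcdn u m.
have g_dvd_m : g %| m := dvdn_gcdr u m.
have g_dvd_u : g %| u := dvdn_gcdl u m.
have x_gt0 : 0 < m %/ g by rewrite divn_gt0 ?gcdn_gt0 ?m_gt0 ?orbT // dvdn_leq.
have : ev (Posz (m %/ g)) = ev 0.
  apply: (iter_inj phi_skew (j := 1)); rewrite ?zexp_in_D //.
  change (phi (ev (Posz (m %/ g))) = phi (ev 0)); rewrite !phi_ev.
  apply/(zexp_even_eq ord_a m_gt0); rewrite mul0r subr0 -PoszM.
  by apply/dvdnP; exists (u %/ g); rewrite -{1}(divnK g_dvd_u) mulnCA divnK.
move/(zexp_even_eq ord_a m_gt0); rewrite subr0 => /(dvdn_leq x_gt0) /= m_le.
apply/eqP; apply: contraTeq m_le => g_neq1; rewrite -ltnNge ltn_Pdiv //.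
by rewrite ltn_neqAle eq_sym g_neq1 gcdn_gt0 m_gt0 orbT.
Qed.

(* phi is multiplicative on the cyclic kernel and maps a^2 to some a^(2u),
   so it acts there as the automorphism a^(2t) |-> a^(2tu). *)
Lemma phi_even_form :
  exists2 u : nat, coprime u m & forall t : int, phi (ev t) = ev (t * u)%R.
Proof.
have ev0 : ev 0 = 1%g by rewrite mulr0.
have [t0 phi_ev1] := smooth_even (zexp_in_D (2 * 1)).
have [u _] := zexp_half_reduce ord_a m_gt0 (1 + t0) 0; rewrite !addr0 => ev_u.
have {t0 ev_u} phi_ev1 : phi (ev 1) = ev (Posz u).
  by rewrite phi_ev1 -zexpDa -ev_u; congr zexp; ring.
have phi_nat (j : nat) : phi (ev (Posz j)) = ev (Posz j * Posz u)%R.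
  elim: j => [|j IH]; first by rewrite mul0r ev0; case: phi_skew.
  have -> : ev (Posz j.+1) = (ev (Posz j) * ev 1)%g.
    by rewrite -zexpDa intS; congr zexp; ring.
  by rewrite phi_evenM ?zexp_in_D // IH phi_ev1 -zexpDa intS; congr zexp; ring.
have phi_ev t : phi (ev t) = ev (t * u)%R.
  have [r _] := zexp_half_reduce ord_a m_gt0 t 0; rewrite !addr0 => ev_r.
  have /(zexp_even_eq ord_a m_gt0) m_dvd := ev_r.
  rewrite ev_r phi_nat; apply/(zexp_even_eq ord_a m_gt0).
  by rewrite (_ : _ - _ = - ((t - Posz r) * Posz u))%R ?rpredN ?dvdz_mulr //; ring.
by exists u => //; apply: phi_even_coprime.
Qed.

Lemma phi_a_form : exists2 r : nat, r < m & phi a = od (Posz r).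
Proof.
have [t0 phi_a] := smooth_even aD.
have [r r_lt ev_r] := zexp_half_reduce ord_a m_gt0 t0 1.
exists r => //; rewrite phi_a -ev_r -[X in (X * _)%g]zexp1 -zexpDa.
by congr zexp; ring.
Qed.

Lemma phi_b_form : exists2 s : nat, s < m & phi b = (ev (Posz s) * b)%g.
Proof.
have [t0 phi_b] := smooth_even bD.
have [s s_lt] := zexp_half_reduce ord_a m_gt0 (- t0) 0; rewrite !addr0 => ev_s.
by exists s => //; rewrite phi_b b_zexpa -ev_s; congr (zexp _ _ * _)%g; ring.
Qed.

Section NormalForm.

Variables (u : int) (r s : nat).
Hypothesis u_coprime : coprimez u m.
Hypothesis phi_ev : forall t : int, phi (ev t) = ev (t * u)%R.
Hypotheses (phi_a : phi a = od (Posz r)) (phi_b : phi b = (ev (Posz s) * b)%g).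

Local Notation e := (pi a).
Local Notation f := (pi b).

Let phiM : {in D &, forall x y, phi (x * y)%g = (phi x * iter (pi x) phi y)%g}.
Proof. by case: phi_skew. Qed.
Let od_ev t : od t = (ev t * a)%g. Proof. by rewrite zexpDa zexp1. Qed.
Let ev0 : ev 0 = 1%g. Proof. by rewrite mulr0. Qed.
Let a_od0 : a = od 0. Proof. by rewrite mulr0 add0r zexp1. Qed.
Let b_ev0 : b = (ev 0 * b)%g. Proof. by rewrite ev0 mul1g. Qed.
Let bb : (b * b)%g = ev 0.
Proof. by rewrite ev0 -{1}(invg_b ord_b) mulVg. Qed.
Let aa : (a * a)%g = ev 1.
Proof. by rewrite -[LHS]/(zexp a 1 * zexp a 1)%g -zexpDa. Qed.
Let b_zexp_b (z : int) : (b * (zexp a z * b))%g = zexp a (- z).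
Proof. by rewrite mulgA b_zexpa -mulgA bb ev0 mulg1. Qed.

Lemma phi_od t : phi (od t) = od (t * u + r)%R.
Proof. by rewrite od_ev phi_evenM // phi_ev phi_a -zexpDa; congr zexp; ring. Qed.

Lemma phi_evb t : phi (ev t * b)%g = (ev (t * u + s)%R * b)%g.
Proof.
by rewrite phi_evenM // phi_ev phi_b mulgA -zexpDa; congr (zexp _ _ * _)%g; ring.
Qed.

Lemma iter_ev j t : iter j phi (ev t) = ev (t * u ^+ j)%R.
Proof.
have := @iter_affine _ phi (fun x => ev x) u 0 _ j t.
by rewrite mul0r addr0; apply=> x; rewrite addr0.
Qed.

Lemma iter_od j t : iter j phi (od t) = od (t * u ^+ j + Posz r * sigma u j)%R.
Proof. exact: (@iter_affine _ phi (fun x => od x) u r phi_od). Qed.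

Lemma iter_evb j t :
  iter j phi (ev t * b)%g = (ev (t * u ^+ j + Posz s * sigma u j)%R * b)%g.
Proof. exact: (@iter_affine _ phi (fun x => ev x * b)%g u s phi_evb). Qed.

Lemma pi_od t : pi (od t) = e.
Proof. by rewrite od_ev pi_evenM. Qed.

Lemma pi_evb t : pi (ev t * b)%g = f.
Proof. by rewrite pi_evenM. Qed.

Let iter_a j : iter j phi a = od (Posz r * sigma u j)%R.
Proof. by rewrite {1}a_od0 iter_od; congr zexp; ring. Qed.

Let iter_b j : iter j phi b = (ev (Posz s * sigma u j)%R * b)%g.
Proof. by rewrite {1}b_ev0 iter_evb; congr (zexp _ _ * _)%g; ring. Qed.

Lemma pi_ab : pi (a * b)%g = e * f %[mod k].
Proof. by apply: (pi_mul_const phi_skew) => // i; rewrite iter_b pi_evb. Qed.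

Lemma phi_ab : phi (a * b)%g = (od (Posz r + Posz s * sigma u e)%R * b)%g.
Proof.
by rewrite phiM // phi_a iter_b mulgA -zexpDa; congr (zexp _ _ * _)%g; ring.
Qed.

Let odb_ev t : (od t * b)%g = (ev t * (a * b))%g.
Proof. by rewrite od_ev mulgA. Qed.

Lemma phi_odb t :
  phi (od t * b)%g = (od (t * u + (Posz r + Posz s * sigma u e))%R * b)%g.
Proof.
rewrite odb_ev phi_evenM ?groupM // phi_ev phi_ab mulgA -zexpDa.
by congr (zexp _ _ * _)%g; ring.
Qed.

Lemma iter_odb j t : iter j phi (od t * b)%g =
  (od (t * u ^+ j + (Posz r + Posz s * sigma u e) * sigma u j)%R * b)%g.
Proof. exact: (@iter_affine _ phi (fun x => od x * b)%g u _ phi_odb). Qed.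

Lemma pi_odb t : pi (od t * b)%g = e * f %[mod k].
Proof. by rewrite odb_ev pi_evenM ?groupM ?pi_ab. Qed.

(* Comparing pi on a*a = a^2 and b*b = 1 shows e^2 = f^2 = 1 mod k. *)
Lemma pi_a_sq : e * e = 1 %[mod k].
Proof.
have pi_iter_a i : pi (iter i phi a) = e by rewrite iter_a pi_od.
by have := pi_mul_const phi_skew aD aD pi_iter_a; rewrite aa pi_even.
Qed.

Lemma pi_b_sq : f * f = 1 %[mod k].
Proof.
have pi_iter_b i : pi (iter i phi b) = f by rewrite iter_b pi_evb.
by have := pi_mul_const phi_skew bD bD pi_iter_b; rewrite bb pi_even.
Qed.

(* a, b and ab lie outside the kernel, so their powers are not 1 mod k. *)
Lemma pi_a_neq1 : e != 1 %[mod k].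
Proof.
apply: contraNneq (odd_notin_kernel 0) => e1.
by rewrite -kerE inE zexp_in_D pi_od e1 eqxx.
Qed.

Lemma pi_b_neq1 : f != 1 %[mod k].
Proof.
apply: contraNneq (b_coset_notin_kernel (2 * 0)) => f1.
by rewrite -kerE inE groupM ?zexp_in_D // pi_evb f1 eqxx.
Qed.

Lemma pi_ab_neq1 : e * f != 1 %[mod k].
Proof.
apply: contraNneq (b_coset_notin_kernel (2 * 0 + 1)) => ef1.
by rewrite -kerE inE groupM ?zexp_in_D // pi_odb ef1 eqxx.
Qed.

(* Condition (c): computing phi(a a^2) = phi(a^2 a) gives u^e = u mod m. *)
Lemma u_pow_e_pred : (m %| (u ^+ (e - 1) - 1)%R)%Z.
Proof.
have [_ e_gt0] := sqrt1_mod_coprime k_gt1 pi_a_sq.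
apply: unit_pow_pred => //.
have a_ev1 : (a * ev 1)%g = od 1.
  by rewrite -[X in (X * _)%g]zexp1 -zexpDa; congr zexp; ring.
have phi_a_ev1 : phi (a * ev 1)%g = od (Posz r + u ^+ e)%R.
  by rewrite phiM ?zexp_in_D // phi_a iter_ev -zexpDa; congr zexp; ring.
rewrite (_ : u ^+ e - u = Posz r + u ^+ e - (1 * u + Posz r))%R; last by ring.
by apply/(zexp_half_eq ord_a m_gt0 _ _ 1); rewrite -phi_a_ev1 a_ev1 phi_od.
Qed.

(* Condition (c) for f: computing phi(b a^2) = phi(a^-2 b) gives u^f = u. *)
Lemma u_pow_f_pred : (m %| (u ^+ (f - 1) - 1)%R)%Z.
Proof.
have [_ f_gt0] := sqrt1_mod_coprime k_gt1 pi_b_sq.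
apply: unit_pow_pred => //.
have b_ev1 : (b * ev 1)%g = (ev (-1) * b)%g.
  by rewrite b_zexpa; congr (zexp _ _ * _)%g; ring.
have phi_b_ev1 : phi (b * ev 1)%g = (ev (Posz s - u ^+ f)%R * b)%g.
  rewrite phiM ?zexp_in_D // phi_b iter_ev -mulgA b_zexpa mulgA -zexpDa.
  by congr (zexp _ _ * _)%g; ring.
rewrite -rpredN (_ : - (u ^+ f - u) = Posz s - u ^+ f - (-1 * u + Posz s))%R;
  last by ring.
apply/(zexp_even_eq ord_a m_gt0); apply: (mulIg b).
by rewrite -phi_b_ev1 b_ev1 phi_evb.
Qed.

(* Condition (d): computing phi(a a) = phi(a^2). *)
Lemma relation_d : (m %| (Posz r * sigma u (e - 1) - (u - 2 * Posz r - 1))%R)%Z.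
Proof.
have [_ e_gt0] := sqrt1_mod_coprime k_gt1 pi_a_sq.
have phi_aa : (m %| (Posz r + Posz r * sigma u e + 1 - 1 * u)%R)%Z.
  apply/(zexp_even_eq ord_a m_gt0); rewrite -phi_ev -aa phiM // phi_a iter_a.
  by rewrite -zexpDa; congr zexp; ring.
have -> : (Posz r * sigma u (e - 1) - (u - 2 * Posz r - 1) =
    (Posz r + Posz r * sigma u e + 1 - 1 * u) * 1 + (u ^+ (e - 1) - 1) * (- Posz r))%R.
  by rewrite (sigma_last u e_gt0); ring.
exact: dvdz_lincomb2 phi_aa u_pow_e_pred.
Qed.

(* Condition (e): computing phi(b b) = phi(1). *)
Lemma relation_e : (m %| (Posz s * sigma u (f - 1))%R)%Z.
Proof.
have [_ f_gt0] := sqrt1_mod_coprime k_gt1 pi_b_sq.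
have phi_bb : (m %| (Posz s - Posz s * sigma u f - 0 * u)%R)%Z.
  apply/(zexp_even_eq ord_a m_gt0); rewrite -phi_ev -bb phiM // phi_b iter_b.
  by rewrite -mulgA b_zexp_b -zexpDa; congr zexp; ring.
have -> : (Posz s * sigma u (f - 1) =
    (Posz s - Posz s * sigma u f - 0 * u) * (-1) + (u ^+ (f - 1) - 1) * (- Posz s))%R.
  by rewrite (sigma_last u f_gt0); ring.
exact: dvdz_lincomb2 phi_bb u_pow_f_pred.
Qed.

(* Condition (f): computing phi(a b) = phi(b a^-1). *)
Lemma relation_f : (m %| (Posz r * sigma u (f - 1) + Posz s * sigma u (e - 1)
                         - (u - 2 * Posz r - 1))%R)%Z.
Proof.
have [_ e_gt0] := sqrt1_mod_coprime k_gt1 pi_a_sq.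
have [_ f_gt0] := sqrt1_mod_coprime k_gt1 pi_b_sq.
have phi_ab_twice : (m %| (Posz r + Posz s * sigma u e
                     - (Posz s + u ^+ f - Posz r * sigma u f - 1))%R)%Z.
  apply/(zexp_half_eq ord_a m_gt0 _ _ 1); apply: (mulIg b).
  have ab_ba : (a * b)%g = (b * od (-1))%g.
    by rewrite b_zexpa -[X in (X * _)%g = _]zexp1; congr (zexp _ _ * _)%g; ring.
  rewrite -phi_ab ab_ba.
  rewrite phiM ?zexp_in_D // phi_b iter_od -mulgA b_zexpa mulgA -zexpDa.
  by congr (zexp _ _ * _)%g; ring.
have -> : (Posz r * sigma u (f - 1) + Posz s * sigma u (e - 1)
             - (u - 2 * Posz r - 1) =
    (Posz r + Posz s * sigma u e - (Posz s + u ^+ f - Posz r * sigma u f - 1)) * 1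
    + (u ^+ (e - 1) - 1) * (- Posz s) + (u ^+ (f - 1) - 1) * (u - Posz r))%R.
  by rewrite (sigma_last u e_gt0) (sigma_last u f_gt0) (expr_last u f_gt0); ring.
exact: dvdz_lincomb3 phi_ab_twice u_pow_e_pred u_pow_f_pred.
Qed.

(* phi^j is the identity on D iff r sigma(u,j) = s sigma(u,j) = 0 mod m; for
   the converse, (d) turns r sigma(u,j) = 0 into u^j = 1 mod m. *)
Lemma iter_id_iff j : {in D, forall x, iter j phi x = x} <->
  (m %| (Posz r * sigma u j)%R)%Z /\ (m %| (Posz s * sigma u j)%R)%Z.
Proof.
split=> [fix_j|[r_dvd s_dvd] x Dx].
  have : od (Posz r * sigma u j)%R = od 0 by rewrite -iter_a -a_od0 fix_j.
  move/(zexp_half_eq ord_a m_gt0); rewrite subr0 => r_dvd; split=> //.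
  have : (ev (Posz s * sigma u j)%R * b)%g = (ev 0 * b)%g.
    by rewrite -iter_b -b_ev0 fix_j.
  by move/mulIg/(zexp_even_eq ord_a m_gt0); rewrite subr0.
have u_pow_j : (m %| (u ^+ j - 1)%R)%Z.
  rewrite -sigma_telescope (_ : (u - 1) * sigma u j =
      (Posz r * sigma u (e - 1) - (u - 2 * Posz r - 1)) * (- sigma u j)
      + (Posz r * sigma u j) * (sigma u (e - 1) + 2))%R; last by ring.
  exact: dvdz_lincomb2 relation_d r_dvd.
have [t [->|->|->|->]] := dihedral_parity_cases m_gt1 dihD Dx.
- rewrite iter_ev; apply/(zexp_even_eq ord_a m_gt0).
  by rewrite (_ : _ - _ = (u ^+ j - 1) * t)%R ?dvdz_mulr //; ring.
- rewrite iter_od; apply/(zexp_half_eq ord_a m_gt0).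
  rewrite (_ : _ - _ = (u ^+ j - 1) * t + (Posz r * sigma u j) * 1)%R; last by ring.
  exact: dvdz_lincomb2.
- rewrite iter_evb; congr (_ * _)%g; apply/(zexp_even_eq ord_a m_gt0).
  rewrite (_ : _ - _ = (u ^+ j - 1) * t + (Posz s * sigma u j) * 1)%R; last by ring.
  exact: dvdz_lincomb2.
- rewrite iter_odb; congr (_ * _)%g; apply/(zexp_half_eq ord_a m_gt0).
  rewrite (_ : _ - _ = (u ^+ j - 1) * t + (Posz r * sigma u j) * 1
                       + (Posz s * sigma u j) * sigma u e)%R; last by ring.
  exact: dvdz_lincomb3.
Qed.

Lemma phi_normal_form (i : int) :
  [/\ phi (ev i) = zexp a (2 * i * u)%R,
      phi (od i) = zexp a (2 * i * u + 2 * Posz r + 1)%R,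
      phi (ev i * b)%g = (zexp a (2 * i * u + 2 * Posz s)%R * b)%g
    & phi (od i * b)%g =
        (zexp a (2 * i * u + 2 * Posz r + 2 * Posz s * sigma u e + 1)%R * b)%g].
Proof.
by split; [rewrite phi_ev; congr zexp | rewrite phi_od; congr zexp
  | rewrite phi_evb; congr (zexp _ _ * _)%g
  | rewrite phi_odb; congr (zexp _ _ * _)%g]; ring.
Qed.

Lemma pi_normal_form (i : int) :
  [/\ pi (ev i) = 1 %[mod k], pi (od i) = e %[mod k],
      pi (ev i * b)%g = f %[mod k] & pi (od i * b)%g = e * f %[mod k]].
Proof. by rewrite pi_even pi_od pi_evb pi_odb. Qed.

Lemma order_condition : 0 < k /\
  (((Posz r * sigma u k = 0 %[mod m])%Z /\ (Posz s * sigma u k = 0 %[mod m])%Z) /\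
   (forall j : nat, 0 < j -> (Posz r * sigma u j = 0 %[mod m])%Z ->
      (Posz s * sigma u j = 0 %[mod m])%Z -> k <= j)).
Proof.
have [_ _ [k_gt0 phi_k k_min] _ _] := phi_skew.
have [r_dvd s_dvd] := (iter_id_iff k).1 phi_k.
split=> //; split; first by split; apply: eqz_mod_of_dvd; rewrite subr0.
move=> j j_gt0 /eqP r_j /eqP s_j; apply: k_min => //; apply/iter_id_iff.
by move: r_j s_j; rewrite !eqz_mod_dvd !subr0.
Qed.

Lemma power_condition :
  [/\ coprime e k, coprime f k, e != 1 %[mod k], f != 1 %[mod k]
    & e * f != 1 %[mod k]] /\ (e ^ 2 = 1 %[mod k] /\ f ^ 2 = 1 %[mod k]).
Proof.
have [cop_e _] := sqrt1_mod_coprime k_gt1 pi_a_sq.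
have [cop_f _] := sqrt1_mod_coprime k_gt1 pi_b_sq.
split; first by split; rewrite ?pi_a_neq1 ?pi_b_neq1 ?pi_ab_neq1.
by rewrite -!mulnn pi_a_sq pi_b_sq.
Qed.

Lemma power_range : 0 < e < k /\ 0 < f < k.
Proof.
have [_ e_gt0] := sqrt1_mod_coprime k_gt1 pi_a_sq.
have [_ f_gt0] := sqrt1_mod_coprime k_gt1 pi_b_sq.
by rewrite e_gt0 f_gt0 !pi_lt_k.
Qed.

End NormalForm.

End SmoothSkewMorphismsOfDihedral.

Theorem theorem5 (gT : finGroupType) (D : {group gT}) (a b : gT) (n : nat)
    (phi : gT -> gT) (pi : gT -> nat) (k : nat) :
  4 <= n -> ~~ odd n -> dihedral D a b n ->
  skew_morphism D phi pi k -> smooth D phi pi k ->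
  skew_kernel D pi k = <[(a ^+ 2)%g]>%g ->
  let h : int := Posz n./2 in
  exists (r s : nat) (u : int) (e f : nat),
    [/\ r < n./2, s < n./2, coprimez u h, 0 < e < k & 0 < f < k] /\
    (forall i : int,
      [/\ phi (zexp a (2 * i)%R) = zexp a (2 * i * u)%R,
          phi (zexp a (2 * i + 1)%R) = zexp a (2 * i * u + 2 * Posz r + 1)%R,
          phi (zexp a (2 * i)%R * b)%g = (zexp a (2 * i * u + 2 * Posz s)%R * b)%g
        & phi (zexp a (2 * i + 1)%R * b)%g =
            (zexp a (2 * i * u + 2 * Posz r + 2 * Posz s * sigma u e + 1)%R * b)%g])
    /\
    (forall i : int,
      [/\ pi (zexp a (2 * i)%R) = 1 %[mod k],
          pi (zexp a (2 * i + 1)%R) = e %[mod k],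
          pi (zexp a (2 * i)%R * b)%g = f %[mod k]
        & pi (zexp a (2 * i + 1)%R * b)%g = e * f %[mod k]])
    /\
    (* (a) *)
    (0 < k /\
     ((Posz r * sigma u k = 0 %[mod h])%Z /\ (Posz s * sigma u k = 0 %[mod h])%Z) /\
     (forall m : nat, 0 < m ->
          (Posz r * sigma u m = 0 %[mod h])%Z -> (Posz s * sigma u m = 0 %[mod h])%Z ->
          k <= m))
    /\
    (* (b) *)
    ([/\ coprime e k, coprime f k,
        e != 1 %[mod k], f != 1 %[mod k] & e * f != 1 %[mod k]] /\
     (e ^ 2 = 1 %[mod k] /\ f ^ 2 = 1 %[mod k]))
    /\
    (* (c) *)
    ((u ^+ (e - 1) = 1 %[mod h])%Z /\ (u ^+ (f - 1) = 1 %[mod h])%Z)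
    /\
    (* (d) *)
    (Posz r * sigma u (e - 1) = u - 2 * Posz r - 1 %[mod h])%Z
    /\
    (* (e) *)
    (Posz s * sigma u (f - 1) = 0 %[mod h])%Z
    /\
    (* (f) *)
    (Posz r * sigma u (f - 1) + Posz s * sigma u (e - 1) = u - 2 * Posz r - 1 %[mod h])%Z.
Proof.
move=> n_ge4 n_even dihD phi_skew phi_smooth kerE h; rewrite {}/h.
have def_n : n = (2 * n./2)%N.
  by rewrite -{1}(odd_double_half n) (negbTE n_even) add0n -mul2n.
set m := n./2 in def_n *; rewrite def_n in dihD.
have m_gt1 : 1 < m by lia.
have [u u_cop phi_ev] := phi_even_form m_gt1 dihD phi_skew phi_smooth kerE.
have [r r_lt phi_a] := phi_a_form m_gt1 dihD phi_skew phi_smooth kerE.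
have [s s_lt phi_b] := phi_b_form m_gt1 dihD phi_skew phi_smooth kerE.
have uz_cop : coprimez u m by rewrite coprimezE.
exists r, s, (Posz u), (pi a), (pi b).
have [e_range f_range] := power_range m_gt1 dihD phi_skew kerE phi_ev phi_a phi_b.
split; first by [].
split; first exact: (phi_normal_form m_gt1 dihD phi_skew kerE phi_ev phi_a phi_b).
split; first exact: (pi_normal_form m_gt1 dihD phi_skew kerE phi_ev phi_b).
split; first exact: (order_condition m_gt1 dihD phi_skew kerE uz_cop
                                      phi_ev phi_a phi_b).
split; first exact: (power_condition m_gt1 dihD phi_skew kerE phi_ev phi_a phi_b).
split; first by split; apply: eqz_mod_of_dvd;
  [exact: (u_pow_e_pred m_gt1 dihD phi_skew kerE uz_cop phi_ev phi_a)
  |exact: (u_pow_f_pred m_gt1 dihD phi_skew kerE uz_cop phi_ev phi_b)].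
split; first exact/eqz_mod_of_dvd/(relation_d m_gt1 dihD phi_skew kerE uz_cop
                                                phi_ev phi_a).
split; first by apply: eqz_mod_of_dvd; rewrite subr0;
  exact: (relation_e m_gt1 dihD phi_skew kerE uz_cop phi_ev phi_b).
exact/eqz_mod_of_dvd/(relation_f m_gt1 dihD phi_skew kerE uz_cop
                                 phi_ev phi_a phi_b).
Qed.
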